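(* Let $K$ be a field of characteristic $p>0$, $s\geq1$ an integer, $n=1+p^s$, let $X$ be the $n\times n$ matrix with $1$'s in positions $(i,i+1)$, $1\leq i\leq n-1$, and $0$ elsewhere, and let $K[X]$ be the $K$-subalgebra of $\mathrm{Mat}_n(K)$ generated by $X$. Then every $K$-algebra automorphism $\varphi$ of $K[X]$ is induced by conjugation with some upper triangular matrix $A\in\mathrm{GL}_n(K)$, i.e. $\varphi(Y)=AYA^{-1}$ for all $Y\in K[X]$. For a given $\varphi$ there is a unique such $A$ whose last column has only zero entries except for a $1$ in position $(n,n)$. Any other matrix inducing $\varphi$ has the form $AC$ for some unit $C$ of $K[X]$. *)

From HB Require Import structures.
From mathcomp Require Import all_boot all_order all_algebra.
Set Implicit Arguments. Unset Strict Implicit. Unset Printing Implicit Defensive.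
Import Order.TTheory GRing.Theory Num.Theory.
Local Open Scope ring_scope.

Definition shiftX (K : fieldType) (m : nat) : 'M[K]_m.+1 :=
  \matrix_(i, j) (if j == i.+1 :> nat then 1 else 0).

Definition in_KX (K : fieldType) (m : nat) (X Y : 'M[K]_m.+1) : Prop :=
  exists q : {poly K}, Y = horner_mx X q.

Definition unit_KX (K : fieldType) (m : nat) (X C : 'M[K]_m.+1) : Prop :=
  in_KX X C /\ exists D, in_KX X D /\ C *m D = 1%:M /\ D *m C = 1%:M.

(* phi (a map on all matrices) restricts to a K-algebra automorphism of K[X]. *)
Definition KX_alg_aut (K : fieldType) (m : nat) (X : 'M[K]_m.+1)
    (phi : 'M[K]_m.+1 -> 'M[K]_m.+1) : Prop :=
  (forall Y, in_KX X Y -> in_KX X (phi Y)) /\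
  (forall Y Z, in_KX X Y -> in_KX X Z -> phi (Y + Z) = phi Y + phi Z) /\
  (forall (a : K) Y, in_KX X Y -> phi (a *: Y) = a *: phi Y) /\
  (forall Y Z, in_KX X Y -> in_KX X Z -> phi (Y *m Z) = phi Y *m phi Z) /\
  phi 1%:M = 1%:M /\
  (forall Y Z, in_KX X Y -> in_KX X Z -> phi Y = phi Z -> Y = Z) /\
  (forall Z, in_KX X Z -> exists Y, in_KX X Y /\ phi Y = Z).

Definition upper_tri (K : fieldType) (m : nat) (A : 'M[K]_m.+1) : Prop :=
  forall i j : 'I_m.+1, (j < i)%N -> A i j = 0.

Definition induces (K : fieldType) (m : nat) (X : 'M[K]_m.+1)
    (phi : 'M[K]_m.+1 -> 'M[K]_m.+1) (A : 'M[K]_m.+1) : Prop :=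
  A \in unitmx /\ forall Y, in_KX X Y -> phi Y = A *m Y *m invmx A.

Definition last_col_en (K : fieldType) (m : nat) (A : 'M[K]_m.+1) : Prop :=
  forall i : 'I_m.+1, A i ord_max = if i == ord_max then 1 else 0.

From HB Require Import structures.
From mathcomp Require Import all_boot all_order all_algebra.
From mathcomp Require Import zify.
Import Order.TTheory GRing.Theory Num.Theory.
Set Implicit Arguments. Unset Strict Implicit. Unset Printing Implicit Defensive.
Local Open Scope ring_scope.

(* Write phi X = q(X). Since X is nilpotent of index exactly n, so is q(X):
   q has no constant term because q(X)^n = phi (X^n) = 0, and q'(0) <> 0 because
   otherwise q(X)^(n-1) = 0 = phi 0, contradicting injectivity.  Hence the
   matrix A whose columns are q(X)^(n-1) e_n, ..., q(X) e_n, e_n satisfies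
   A X = q(X) A; it is upper triangular with diagonal entries the powers of
   q'(0), so A induces phi.  A matrix B with B X = q(X) B is determined by its
   last column, which gives uniqueness, and A^-1 B commutes with X, hence lies
   in K[X]. *)

Section PolyNoConstantTerm.
Variables (R : comNzRingType) (q : {poly R}).
Hypothesis q0 : q`_0 = 0.

Lemma expr_coef0_eq0 k : q ^+ k = drop_poly 1 q ^+ k * 'X^k.
Proof.
have take_q : take_poly 1 q = 0.
  by apply/polyP => i; rewrite coef_take_poly coef0; case: i.
by rewrite -{1}(poly_take_drop 1 q) take_q add0r exprMn -exprM mul1n.
Qed.

Lemma coef_expr_coef0_eq0_lt k i : (i < k)%N -> (q ^+ k)`_i = 0.
Proof. by move=> lt_ik; rewrite expr_coef0_eq0 coefMXn lt_ik. Qed.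

Lemma coef_expr_coef0_eq0_diag k : (q ^+ k)`_k = q`_1 ^+ k.
Proof.
by rewrite expr_coef0_eq0 coefMXn ltnn subnn -horner_coef0 horner_exp
  horner_coef0 coef_drop_poly.
Qed.

End PolyNoConstantTerm.

Lemma intertwine_horner_mx (R : comNzRingType) n (A X Y : 'M[R]_n.+1) q :
  A *m X = Y *m A -> A *m horner_mx X q = horner_mx Y q *m A.
Proof.
move=> AXYA; elim/poly_ind: q => [|q c IHq]; first by rewrite !rmorph0 mulmx0 mul0mx.
rewrite !rmorphD !rmorphM /= !horner_mx_X !horner_mx_C -!mulmxE.
by rewrite mulmxDr mulmxDl mulmxA IHq -!mulmxA AXYA scalar_mxC.
Qed.

Section ShiftMatrix.
Variables (K : fieldType) (m : nat).
Local Notation X := (shiftX K m).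

Lemma mulmx_shiftX_entry (M : 'M[K]_m.+1) i (j : 'I_m.+1) :
  (M *m X) i j = if (0 < j)%N then M i (inord j.-1) else 0.
Proof.
rewrite mxE; have [j0|j_gt0] := posnP j.
  by apply: big1 => l _; rewrite mxE j0 mulr0.
have lt_pj_m : (j.-1 < m.+1)%N by rewrite prednK // ltnW.
rewrite (bigD1 (inord j.-1)) //= big1 ?addr0.
  by rewrite mxE inordK // prednK // eqxx mulr1.
move=> l /eqP l_neq; rewrite mxE; case: eqP => [j_eq|]; last by rewrite mulr0.
by case: l_neq; apply: val_inj; rewrite /= inordK // j_eq.
Qed.

Lemma shiftX_exp_entry k (i j : 'I_m.+1) :
  (X ^+ k) i j = if j == (i + k)%N :> nat then 1 else 0.
Proof.
elim: k i j => [|k IHk] i j; first by rewrite expr0 mxE addn0 val_eqE eq_sym; case: eqP.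
rewrite exprSr -mulmxE mulmx_shiftX_entry; have [j0|j_gt0] := posnP j.
  by rewrite j0 addnS.
rewrite IHk inordK; last by rewrite prednK // ltnW.
by rewrite addnS -(inj_eq succn_inj) prednK.
Qed.

Lemma horner_shiftX_entry (q : {poly K}) (i j : 'I_m.+1) :
  horner_mx X q i j = if (i <= j)%N then q`_(j - i) else 0.
Proof.
elim/poly_ind: q i j => [|q c IHq] i j; first by rewrite rmorph0 mxE coef0 if_same.
rewrite rmorphD rmorphM /= horner_mx_X horner_mx_C -mulmxE mxE mulmx_shiftX_entry.
rewrite mxE coefD coefMX coefC -val_eqE /=.
have [j0|j_gt0] := posnP j.
  by rewrite j0 add0r; case: (posnP i) => [->|i_gt0]; rewrite ?add0r // leqNgt i_gt0.
rewrite IHq inordK; last by rewrite prednK // ltnW.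
have [lt_ij|lt_ji|eq_ij] := ltngtP i j.
- rewrite mulr0n addr0 -ltnS prednK // lt_ij subn_eq0 leqNgt lt_ij addr0.
  by rewrite -!subn1 subnAC.
- by rewrite mulr0n leqNgt (leq_ltn_trans (leq_pred j) lt_ji) addr0.
- by rewrite eq_ij mulr1n subnn add0r -ltnS prednK // ltnn add0r.
Qed.

Lemma shiftX_expS_m : X ^+ m.+1 = 0.
Proof.
apply/matrixP => i j; rewrite shiftX_exp_entry mxE.
by case: eqP => // j_eq; move: (ltn_ord j); rewrite j_eq; lia.
Qed.

Lemma shiftX_exp_m_neq0 : X ^+ m != 0.
Proof.
apply/negP => /eqP/matrixP/(_ ord0 ord_max).
by rewrite shiftX_exp_entry mxE eqxx; apply/eqP; rewrite oner_eq0.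
Qed.

Lemma horner_mx_in_KX q : in_KX X (horner_mx X q).
Proof. by exists q. Qed.

Lemma shiftX_in_KX : in_KX X X.
Proof. by exists 'X; rewrite horner_mx_X. Qed.

(* Right multiplication by X shifts columns to the right, so an intertwiner
   is determined column by column, from the last one backwards. *)
Lemma intertwiner_eq_last_col {Z M N : 'M[K]_m.+1} :
  M *m X = Z *m M -> N *m X = Z *m N ->
  (forall i, M i ord_max = N i ord_max) -> M = N.
Proof.
move=> MXZM NXZN eq_last.
suff eq_col k i (j : 'I_m.+1) : (j + k)%N = m -> M i j = N i j.
  by apply/matrixP => i j; apply: (eq_col (m - j)%N); have := ltn_ord j; lia.
elim: k i j => [|k IHk] i j jk_m.
  by have -> : j = ord_max by apply: val_inj => /=; lia.
have lt_Sj_Sm : (j.+1 < m.+1)%N by lia.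
have colS (P : 'M[K]_m.+1) : P i j = (P *m X) i (Ordinal lt_Sj_Sm).
  by rewrite mulmx_shiftX_entry /=; congr (P i _); apply: val_inj; rewrite /= inordK.
rewrite colS MXZM (colS N) NXZN !mxE; apply: eq_bigr => l _.
by rewrite IHk //= addSnnS.
Qed.

Lemma commute_shiftX_in_KX (C : 'M[K]_m.+1) : C *m X = X *m C -> in_KX X C.
Proof.
move=> CX_XC; exists (\poly_(k < m.+1) C (inord (m - k)) ord_max).
apply: (intertwiner_eq_last_col CX_XC); first exact: comm_horner_mx.
move=> i; rewrite horner_shiftX_entry /= leq_ord coef_poly ltnS leq_subr.
by rewrite subKn ?leq_ord // inord_val.
Qed.

Definition krylov_mx (Y : 'M[K]_m.+1) : 'M[K]_m.+1 :=
  \matrix_(i, j) (Y ^+ (m - j)) i ord_max.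

Lemma krylov_mx_intertwine (Y : 'M[K]_m.+1) :
  Y ^+ m.+1 = 0 -> krylov_mx Y *m X = Y *m krylov_mx Y.
Proof.
move=> Y_nil; apply/matrixP => i j.
have -> : (Y *m krylov_mx Y) i j = (Y ^+ (m - j).+1) i ord_max.
  by rewrite exprS !mxE; apply: eq_bigr => l _; rewrite mxE.
rewrite mulmx_shiftX_entry; have [j0|j_gt0] := posnP j.
  by rewrite j0 subn0 Y_nil mxE.
rewrite mxE inordK; last by rewrite prednK // ltnW.
by congr ((Y ^+ _) i ord_max); have := ltn_ord j; lia.
Qed.

Lemma last_col_krylov_mx (Y : 'M[K]_m.+1) : last_col_en (krylov_mx Y).
Proof. by move=> i; rewrite mxE subnn expr0 mxE; case: eqP. Qed.

Lemma krylov_horner_shiftX_entry (q : {poly K}) (i j : 'I_m.+1) :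
  krylov_mx (horner_mx X q) i j = (q ^+ (m - j))`_(m - i).
Proof. by rewrite mxE -rmorphXn horner_shiftX_entry /= leq_ord. Qed.

Section NoConstantTerm.
Variable q : {poly K}.
Hypothesis q0 : q`_0 = 0.

Lemma upper_tri_krylov_mx : upper_tri (krylov_mx (horner_mx X q)).
Proof.
move=> i j lt_ji; rewrite krylov_horner_shiftX_entry coef_expr_coef0_eq0_lt //.
by have := ltn_ord i; lia.
Qed.

Lemma krylov_mx_unit : q`_1 != 0 -> krylov_mx (horner_mx X q) \in unitmx.
Proof.
move=> q1; rewrite unitmxE unitfE -det_tr det_trig.
  apply/prodf_neq0 => i _.
  by rewrite mxE krylov_horner_shiftX_entry coef_expr_coef0_eq0_diag // expf_neq0.
apply/forallP => i; apply/forallP => j; apply/implyP => lt_ij.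
by rewrite mxE upper_tri_krylov_mx.
Qed.

End NoConstantTerm.

Section Inducing.
Variable phi : 'M[K]_m.+1 -> 'M[K]_m.+1.

Lemma induces_intertwine {B} : induces X phi B -> B *m X = phi X *m B.
Proof. by case=> B_unit phiE; rewrite phiE ?mulmxKV //; exact: shiftX_in_KX. Qed.

Lemma induces_eq_last_col A B :
  induces X phi A -> induces X phi B ->
  (forall i, A i ord_max = B i ord_max) -> A = B.
Proof.
move=> /induces_intertwine AX /induces_intertwine BX; exact: (intertwiner_eq_last_col AX BX).
Qed.

Lemma induces_mul_unit_KX A B :
  induces X phi A -> induces X phi B -> exists C, unit_KX X C /\ B = A *m C.
Proof.
move=> indA indB; have [A_unit _] := indA; have [B_unit _] := indB.
pose C := invmx A *m B.
have C_unit : C \in unitmx by rewrite unitmx_mul unitmx_inv A_unit.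
have CX_XC : C *m X = X *m C.
  have phiX : phi X = A *m X *m invmx A by rewrite induces_intertwine // mulmxK.
  by rewrite -mulmxA (induces_intertwine indB) phiX !mulmxA mulVmx // mul1mx.
have CiX_XCi : invmx C *m X = X *m invmx C.
  by apply: (canRL (mulmxK C_unit)); rewrite -mulmxA -CX_XC mulmxA mulVmx // mul1mx.
exists C; split; last by rewrite mulKVmx.
split; first exact: commute_shiftX_in_KX.
exists (invmx C); split; first exact: commute_shiftX_in_KX.
by rewrite mulmxV // mulVmx.
Qed.

End Inducing.

End ShiftMatrix.

Section Automorphism.
Variables (K : fieldType) (m : nat) (phi : 'M[K]_m.+1 -> 'M[K]_m.+1).
Hypothesis phi_aut : KX_alg_aut (shiftX K m) phi.
Local Notation X := (shiftX K m).

Lemma aut_horner_mx q : phi (horner_mx X q) = horner_mx (phi X) q.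
Proof.
have [_ [phiD [phiZ [phiM [phi1 _]]]]] := phi_aut.
have one_KX : in_KX X 1%:M by exists 1%:P; rewrite horner_mx_C.
elim/poly_ind: q => [|q c IHq]; first by rewrite !rmorph0 -(scale0r 1%:M) phiZ // phi1.
rewrite !rmorphD !rmorphM /= !horner_mx_X !horner_mx_C -!mulmxE -[c%:M]scalemx1.
rewrite phiD ?phiM ?phiZ ?IHq ?phi1 //.
- exact: horner_mx_in_KX.
- exact: shiftX_in_KX.
- by exists (q * 'X); rewrite rmorphM /= horner_mx_X.
- by exists c%:P; rewrite horner_mx_C scalemx1.
Qed.

Lemma aut_exp k : phi (X ^+ k) = phi X ^+ k.
Proof. by have := aut_horner_mx 'X^k; rewrite !rmorphXn /= !horner_mx_X. Qed.

Lemma aut0 : phi 0 = 0.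
Proof. by have := aut_horner_mx 0; rewrite !rmorph0. Qed.

Section ImageOfShift.
Variable q : {poly K}.
Hypothesis phiX : phi X = horner_mx X q.

Lemma aut_shiftX_coef0 : q`_0 = 0.
Proof.
have := congr1 (fun M : 'M[K]_m.+1 => M ord_max ord_max) (aut_exp m.+1).
rewrite /= shiftX_expS_m aut0 phiX -rmorphXn horner_shiftX_entry leqnn subnn mxE.
by rewrite -horner_coef0 horner_exp horner_coef0 => /esym/eqP; rewrite expf_eq0 => /andP[_ /eqP].
Qed.

Lemma aut_shiftX_coef1 : (0 < m)%N -> q`_1 != 0.
Proof.
move=> m_gt0; apply/eqP => q1; have [_ [_ [_ [_ [_ [phi_inj _]]]]]] := phi_aut.
have phiXm0 : phi (X ^+ m) = 0.
  apply/matrixP => i j; rewrite aut_exp phiX -rmorphXn horner_shiftX_entry mxE.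
  case: ifP => // le_ij; have [lt_jim|ge_jim] := ltnP (j - i) m.
    by rewrite coef_expr_coef0_eq0_lt // aut_shiftX_coef0.
  have -> : (j - i = m)%N by have := ltn_ord j; lia.
  by rewrite coef_expr_coef0_eq0_diag ?aut_shiftX_coef0 // q1 expr0n gtn_eqF.
apply/negP: (@shiftX_exp_m_neq0 K m); apply/negPn/eqP.
apply: phi_inj; rewrite ?phiXm0 ?aut0 //; last by exists 0; rewrite rmorph0.
by exists 'X^m; rewrite rmorphXn /= horner_mx_X.
Qed.

End ImageOfShift.

Lemma aut_induced_by_krylov_mx : (0 < m)%N ->
  [/\ upper_tri (krylov_mx (phi X)), induces X phi (krylov_mx (phi X))
    & last_col_en (krylov_mx (phi X))].
Proof.
move=> m_gt0; have [phi_KX _] := phi_aut.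
have [q phiX] := phi_KX X (@shiftX_in_KX K m).
have q0 := aut_shiftX_coef0 phiX; have q1 := aut_shiftX_coef1 phiX m_gt0.
have phiX_nil : phi X ^+ m.+1 = 0 by rewrite -aut_exp shiftX_expS_m aut0.
split; [by rewrite phiX; exact: upper_tri_krylov_mx | | exact: last_col_krylov_mx].
split; first by rewrite phiX; exact: krylov_mx_unit.
move=> _ [p ->]; rewrite aut_horner_mx.
by rewrite (intertwine_horner_mx _ (krylov_mx_intertwine phiX_nil)) mulmxK // phiX krylov_mx_unit.
Qed.

End Automorphism.

Theorem lemma3p3 (K : fieldType) (p s : nat) (hp : p \in [pchar K]) (hs : (1 <= s)%N)
    (phi : 'M[K]_((p ^ s).+1) -> 'M[K]_((p ^ s).+1))
    (hphi : KX_alg_aut (shiftX K (p ^ s)) phi) :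
  (exists A, upper_tri A /\ induces (shiftX K (p ^ s)) phi A)
  /\ (exists A, [/\ upper_tri A, induces (shiftX K (p ^ s)) phi A, last_col_en A,
        forall B, upper_tri B -> induces (shiftX K (p ^ s)) phi B -> last_col_en B -> B = A &
        forall B, induces (shiftX K (p ^ s)) phi B ->
          exists C, unit_KX (shiftX K (p ^ s)) C /\ B = A *m C]).
Proof.
have m_gt0 : (0 < p ^ s)%N by rewrite expn_gt0 (prime_gt0 (pcharf_prime hp)).
set A := krylov_mx (phi (shiftX K (p ^ s))).
have [upA indA lastA] := aut_induced_by_krylov_mx hphi m_gt0.
split; first by exists A.
exists A; split => // [B _ indB lastB | B indB].
- by apply: induces_eq_last_col indB indA _ => i; rewrite lastB lastA.
- exact: induces_mul_unit_KX indA indB.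
Qed.
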